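(* Fix integers $N\ge1$, $K\ge1$, and for each $k\in\{1,\dots,K\}$ parameters $\theta_k>0$, $a_k>0$, $\rho_k\in[0,1]$; let $\sigma_v,\sigma_u,\sigma_\eta,\sigma_\nu>0$ and $\bar\rho=K^{-1}\sum_k\rho_k$. For $\phi\in[0,1]$ let $\lambda(\phi)=\frac{\sigma_v}{2\sigma_u}\big(1+\phi^2\bar\rho^2\sigma_\eta^2/\sigma_v^2\big)^{-1/2}$ and $\delta_k(\phi)=N\phi a_k\rho_k/\lambda(\phi)$. Define the cross-sectional dispersion of AI fund returns $$D(\phi)=\sqrt{\sum_{k=1}^K\frac{(1-\rho_k^2)\sigma_\nu^2a_k^2}{\left[\theta_k+\delta_k(\phi)\right]^2}}.$$ Then $D(\phi)$ is monotonically decreasing in $\phi$, and in the monoculture limit ($\phi\to1$ and $\rho_k\to1$ for all $k$), $D\to 0$.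
   Context: In the model, $D(\phi)$ is the paper's expression for $\sqrt{\operatorname{Var}_i[\sum_k\alpha_{i,k}(\phi)]}$, the cross-sectional standard deviation over AI investors $i$ of their total alpha; $\sigma_\nu^2$ is the variance of the idiosyncratic noise in AI signals, $\rho_k$ the algorithmic homogeneity of signal $k$, $a_k$ the aggressiveness parameter, $\theta_k$ the natural mean-reversion rate of signal $k$, $\phi$ the AI adoption rate among $N$ investors, $\sigma_u^2$ noise-trader variance, $\sigma_v$ fundamental volatility, $\sigma_\eta^2$ common AI noise variance. *)

From HB Require Import structures.
From mathcomp Require Import all_boot all_order all_algebra.
From mathcomp Require Import reals.
Set Implicit Arguments. Unset Strict Implicit. Unset Printing Implicit Defensive.
Import Order.TTheory GRing.Theory Num.Theory.
Local Open Scope ring_scope.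

Section Model.
Variable R : realType.

Definition rho_bar (K : nat) (rho : 'I_K -> R) : R :=
  (K%:R)^-1 * \sum_(k < K) rho k.

Definition lambda (K : nat) (rho : 'I_K -> R) (sv su se : R) (phi : R) : R :=
  sv / (2 * su) / Num.sqrt (1 + phi ^+ 2 * (rho_bar rho) ^+ 2 * se ^+ 2 / sv ^+ 2).

Definition delta (N K : nat) (a rho : 'I_K -> R) (sv su se : R) (phi : R)
  (k : 'I_K) : R :=
  N%:R * phi * a k * rho k / lambda rho sv su se phi.

Definition Disp (N K : nat) (theta a rho : 'I_K -> R) (sv su se snu : R)
  (phi : R) : R :=
  Num.sqrt (\sum_(k < K)
     ((1 - rho k ^+ 2) * snu ^+ 2 * a k ^+ 2 /
       (theta k + delta N a rho sv su se phi k) ^+ 2)).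

End Model.

From Pilot Require Import Defs.
From HB Require Import structures.
From mathcomp Require Import all_boot all_order all_algebra.
From mathcomp Require Import reals.
From mathcomp Require Import ring lra.
Import Order.TTheory GRing.Theory Num.Theory.
Local Open Scope ring_scope.

(* Up to the nonnegative factor [N a_k rho_k (2 sigma_u / sigma_v)], the
   feedback term [delta_k(phi)] equals [phi * sqrt (1 + phi^2 Q)] with [Q >= 0],
   which is nondecreasing in [phi]; since every summand of [D(phi)^2] has a
   nonnegative numerator over [(theta_k + delta_k(phi))^2], [D] decreases.
   Hence [D(phi) <= D(0)], and
   [D(0)^2 = sum_k (1 - rho_k^2) sigma_nu^2 a_k^2 / theta_k^2] is at most
   [2 max_k (1 - rho_k)] times a constant, which gives the limit. *)

Lemma ler_div_sqr (R : realFieldType) (x y1 y2 : R) :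
  0 <= x -> 0 < y1 -> y1 <= y2 -> x / y2 ^+ 2 <= x / y1 ^+ 2.
Proof.
move=> x_ge0 y1_gt0 y12; have y2_gt0 : 0 < y2 := lt_le_trans y1_gt0 y12.
by rewrite ler_wpM2l // lef_pV2 ?posrE ?exprn_gt0 // ler_pXn2r // nnegrE ltW.
Qed.

Lemma mul_sqrt_nondecreasing (R : rcfType) (Q phi1 phi2 : R) :
  0 <= Q -> 0 <= phi1 -> phi1 <= phi2 ->
  phi1 * Num.sqrt (1 + phi1 ^+ 2 * Q) <= phi2 * Num.sqrt (1 + phi2 ^+ 2 * Q).
Proof.
move=> Q_ge0 phi1_ge0 phi12; have phi2_ge0 : 0 <= phi2 := le_trans phi1_ge0 phi12.
have sqrt_le : Num.sqrt (1 + phi1 ^+ 2 * Q) <= Num.sqrt (1 + phi2 ^+ 2 * Q).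
  by rewrite ler_sqrt ?addr_ge0 ?mulr_ge0 ?sqr_ge0 // lerD2l ler_wpM2r // ler_pXn2r.
exact: ler_pM phi1_ge0 (sqrtr_ge0 _) phi12 sqrt_le.
Qed.

Section Dispersion.
Context {R : realType} {N K : nat} {theta a rho : 'I_K -> R} {sv su se snu : R}.
Hypotheses (theta_gt0 : forall k, 0 < theta k) (a_ge0 : forall k, 0 <= a k).
Hypotheses (sv_gt0 : 0 < sv) (su_gt0 : 0 < su).
Hypothesis rho01 : forall k, 0 <= rho k <= 1.

Local Notation delta := (Defs.delta N a rho sv su se).
Local Notation Disp := (Defs.Disp N theta a rho sv su se snu).
Let Q := rho_bar rho ^+ 2 * se ^+ 2 / sv ^+ 2.

Let Q_ge0 : 0 <= Q.
Proof. by rewrite /Q divr_ge0 ?sqr_ge0 // mulr_ge0 ?sqr_ge0. Qed.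

Lemma deltaE phi k :
  delta phi k = N%:R * a k * rho k * (2 * su / sv) *
                (phi * Num.sqrt (1 + phi ^+ 2 * Q)).
Proof.
rewrite /Defs.delta /lambda.
have -> : phi ^+ 2 * rho_bar rho ^+ 2 * se ^+ 2 / sv ^+ 2 = phi ^+ 2 * Q.
  by rewrite /Q !mulrA.
set s := Num.sqrt _.
have s_gt0 : 0 < s by rewrite sqrtr_gt0 ltr_pwDl // mulr_ge0 ?sqr_ge0.
by field; rewrite !gt_eqF.
Qed.

Lemma delta_coef_ge0 k : 0 <= N%:R * a k * rho k * (2 * su / sv).
Proof.
have /andP[rho_ge0 _] := rho01 k.
by rewrite mulr_ge0 ?divr_ge0 ?mulr_ge0 ?ler0n // ltW.
Qed.

Lemma delta_ge0 phi k : 0 <= phi -> 0 <= delta phi k.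
Proof.
by move=> phi_ge0; rewrite deltaE mulr_ge0 ?delta_coef_ge0 ?mulr_ge0 ?sqrtr_ge0.
Qed.

Lemma delta_nondecreasing phi1 phi2 k :
  0 <= phi1 -> phi1 <= phi2 -> delta phi1 k <= delta phi2 k.
Proof.
move=> phi1_ge0 phi12; rewrite !deltaE ler_wpM2l ?delta_coef_ge0 //.
exact: mul_sqrt_nondecreasing.
Qed.

Lemma delta0 k : delta 0 k = 0.
Proof. by rewrite /Defs.delta mulr0 !mul0r. Qed.

Lemma Disp_numer_ge0 k : 0 <= (1 - rho k ^+ 2) * snu ^+ 2 * a k ^+ 2.
Proof.
have /andP[rho_ge0 rho_le1] := rho01 k.
by rewrite !(mulr_ge0 _ (sqr_ge0 _)) //; nra.
Qed.

Lemma Disp_nonincreasing phi1 phi2 :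
  0 <= phi1 -> phi1 <= phi2 -> Disp phi2 <= Disp phi1.
Proof.
move=> phi1_ge0 phi12; rewrite ler_sqrt; last first.
  by apply: sumr_ge0 => k _; rewrite divr_ge0 ?Disp_numer_ge0 ?sqr_ge0.
apply: ler_sum => k _; apply: ler_div_sqr; first exact: Disp_numer_ge0.
  by rewrite ltr_wpDr ?delta_ge0.
by rewrite lerD2l delta_nondecreasing.
Qed.

Lemma sqr_Disp0_le d : (forall k, 1 - rho k <= d) ->
  Disp 0 ^+ 2 <= 2 * d * \sum_(k < K) snu ^+ 2 * a k ^+ 2 / theta k ^+ 2.
Proof.
move=> rho_close; rewrite sqr_sqrtr; last first.
  by apply: sumr_ge0 => k _; rewrite divr_ge0 ?Disp_numer_ge0 ?sqr_ge0.
rewrite mulr_sumr; apply: ler_sum => k _.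
set c := snu ^+ 2 * a k ^+ 2 / theta k ^+ 2.
have c_ge0 : 0 <= c by rewrite divr_ge0 ?sqr_ge0 // mulr_ge0 ?sqr_ge0.
rewrite delta0 addr0.
have -> : (1 - rho k ^+ 2) * snu ^+ 2 * a k ^+ 2 / theta k ^+ 2 = (1 - rho k ^+ 2) * c.
  by rewrite /c !mulrA.
rewrite ler_wpM2r //.
have /andP[rho_ge0 rho_le1] := rho01 k; have := rho_close k; nra.
Qed.

End Dispersion.

Theorem corollary1 (R : realType) (N K : nat) (hN : (1 <= N)%N) (hK : (1 <= K)%N)
  (theta a : 'I_K -> R) (sv su se snu : R)
  (htheta : forall k, 0 < theta k) (ha : forall k, 0 < a k)
  (hsv : 0 < sv) (hsu : 0 < su) (hse : 0 < se) (hsnu : 0 < snu) :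
  (* (i) D is monotonically (weakly) decreasing in phi on [0,1], for every rho in [0,1]^K *)
  (forall rho : 'I_K -> R, (forall k, 0 <= rho k <= 1) ->
     forall phi1 phi2 : R, 0 <= phi1 -> phi1 <= phi2 -> phi2 <= 1 ->
       Disp N theta a rho sv su se snu phi2 <= Disp N theta a rho sv su se snu phi1)
  /\
  (* (ii) monoculture limit: D -> 0 as phi -> 1 and rho_k -> 1 for all k (jointly) *)
  (forall eps : R, 0 < eps -> exists2 del : R, 0 < del &
     forall (phi : R) (rho : 'I_K -> R),
       0 <= phi <= 1 -> (forall k, 0 <= rho k <= 1) ->
       `|1 - phi| < del -> (forall k, `|1 - rho k| < del) ->
       `|Disp N theta a rho sv su se snu phi| < eps).
Proof.
have a_ge0 k : 0 <= a k by exact: ltW.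
split=> [rho rho01 phi1 phi2 phi1_ge0 phi12 _ | eps eps_gt0].
  exact: Disp_nonincreasing.
set M := \sum_(k < K) snu ^+ 2 * a k ^+ 2 / theta k ^+ 2.
have M_ge0 : 0 <= M.
  by apply: sumr_ge0 => k _; rewrite divr_ge0 ?sqr_ge0 // mulr_ge0 ?sqr_ge0.
pose del := eps ^+ 2 / (2 * M + 1).
have del_gt0 : 0 < del by rewrite divr_gt0 ?exprn_gt0 //; lra.
have del_small : 2 * del * M < eps ^+ 2.
  rewrite -[eps ^+ 2](@divfK _ (2 * M + 1)) -/del; last by lra.
  by rewrite mulrDr mulr1 [del * _]mulrCA -[2 * del * M]mulrA ltrDl.
exists del => // phi rho /andP[phi_ge0 _] rho01 _ rho_close.
have rho_le : forall k, 1 - rho k <= del.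
  by move=> k; apply/ltW/(le_lt_trans (ler_norm _) (rho_close k)).
have Disp0_lt : Disp N theta a rho sv su se snu 0 < eps.
  rewrite -(ltr_pXn2r (_ : 0 < 2)%N) ?nnegrE ?sqrtr_ge0 ?ltW //.
  apply: le_lt_trans del_small.
  exact: sqr_Disp0_le rho01 del rho_le.
rewrite ger0_norm ?sqrtr_ge0 //; apply: le_lt_trans Disp0_lt.
exact: Disp_nonincreasing htheta a_ge0 hsv hsu rho01 _ _ (lexx 0) phi_ge0.
Qed.
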